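(* Let $b\ge 2$. For every positive integer $N$ there exist infinitely many positive integers $M$ such that $N\cdot M$ is a $b$-wARH number. In particular every positive integer divides some $b$-wARH number.
   Context: Fix a base $b\ge 2$. $s_b(N)$ is the sum of the base-$b$ digits of $N$. For a positive integer $X$, its reversal $X^R$ is the integer whose base-$b$ representation is that of $X$ written in reverse order (leading zeros of the result are dropped). A positive integer $N$ is a $b$-wARH number if there exists an integer $A\ge 0$ such that $N=(A+s_b(N))+(A+s_b(N))^R$. *)

From mathcomp Require Import all_boot.
Set Implicit Arguments. Unset Strict Implicit. Unset Printing Implicit Defensive.

(* base-b digits of n, least significant first; fuel k (k = n suffices for b >= 2) *)
Fixpoint digits_fuel (b k n : nat) : seq nat :=
  match k with
  | 0 => [::]
  | k'.+1 => if n == 0 then [::] else (n %% b) :: digits_fuel b k' (n %/ b)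
  end.

Definition digits (b n : nat) : seq nat := digits_fuel b n n.

Definition from_digits (b : nat) (s : seq nat) : nat :=
  foldr (fun d acc => d + b * acc) 0 s.

Definition digsum (b n : nat) : nat := sumn (digits b n).

(* X^R: reverse the base-b representation (leading zeros of the result vanish) *)
Definition rev_num (b n : nat) : nat := from_digits b (rev (digits b n)).

Definition wARH (b N : nat) : Prop :=
  0 < N /\ exists A : nat, N = (A + digsum b N) + rev_num b (A + digsum b N).

From mathcomp Require Import all_boot.
From mathcomp Require cyclic.
From mathcomp Require Import zify.

Set Implicit Arguments.
Unset Strict Implicit.
Unset Printing Implicit Defensive.

(* Fix k and let D be the base-b digit block
     1, 0^k, (b-1)^(k+1)      (least significant digit first),
   whose value plus the value of its reversal is b^(2k+1) * (b+1).  Let X be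
   the number whose digit string is r copies of D.  Then X + X^R equals
     T = b^(2k+1) * (b+1) * G,   G = 1 + Y + ... + Y^(r-1),   Y = b^(2k+2),
   and, since multiplying by b does not change digit sums, s_b(T) is at most
   (b+1) * G <= X; hence A = X - s_b(T) witnesses that T is b-wARH.
   Given N, split it as N = N1 * N2 with N1 the part of N made of primes
   dividing b.  Then N1 divides b^N | b^(2k+1) once k >= N, and for
   r = phi(N2 * (Y-1)) Euler's theorem gives N2 | G.  So N | T, and taking
   k large makes M = T / N exceed any given bound. *)

Definition geom (Y r : nat) : nat := \sum_(i < r) Y ^ i.

Lemma geomS Y r : geom Y r.+1 = 1 + Y * geom Y r.
Proof.
by rewrite /geom big_ord_recl expn0 big_distrr; congr (_ + _);
  apply: eq_bigr => i _; rewrite expnS.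
Qed.

Lemma geomE Y r : 0 < Y -> Y.-1 * geom Y r + 1 = Y ^ r.
Proof.
move=> hY; elim: r => [|r IH]; first by rewrite /geom big_ord0 muln0.
by rewrite geomS expnS -IH; case: Y hY {IH} => //= Y _; lia.
Qed.

Lemma geom_gt0 Y r : 0 < r -> 0 < geom Y r.
Proof. by case: r => // r _; rewrite geomS add1n. Qed.

Section Evaluation.
Variable b : nat.

Lemma from_digits_cat s t :
  from_digits b (s ++ t) = from_digits b s + b ^ size s * from_digits b t.
Proof.
elim: s => [|d s IH] /=; first by rewrite expn0 mul1n.
rewrite IH expnS; lia.
Qed.

Lemma from_digits_nseq0 n : from_digits b (nseq n 0) = 0.
Proof. by elim: n => [|n IH] //=; rewrite IH muln0. Qed.

Lemma from_digits_repeat D r :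
  from_digits b (flatten (nseq r D)) = from_digits b D * geom (b ^ size D) r.
Proof.
elim: r => [|r IH]; first by rewrite /geom big_ord0 muln0.
by rewrite geomS /= from_digits_cat IH; nia.
Qed.

End Evaluation.

Section Digits.
Variable b : nat.
Hypothesis hb : 2 <= b.

Lemma from_digits_nseq_max n : (from_digits b (nseq n b.-1)).+1 = b ^ n.
Proof. by elim: n => [|n IH] //=; rewrite expnS -IH; lia. Qed.

Lemma digits_fuel_enough k1 k2 n : n <= k1 -> n <= k2 ->
  digits_fuel b k1 n = digits_fuel b k2 n.
Proof.
elim: k1 k2 n => [|k1 IH] [|k2] n h1 h2 //=.
- by have -> : n = 0 by lia.
- by have -> : n = 0 by lia.
- case: eqP => // /eqP hn.
  have hlt : n %/ b < n by apply: ltn_Pdiv; lia.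
  by congr cons; apply: IH; lia.
Qed.

Lemma digitsE n : 0 < n -> digits b n = n %% b :: digits b (n %/ b).
Proof.
case: n => [//|n] _; rewrite /digits /=.
congr cons; apply: digits_fuel_enough => //.
have : n.+1 %/ b < n.+1 by apply: ltn_Pdiv; lia.
lia.
Qed.

(* A list of genuine digits without leading zero is the digit list of its
   value; this lets us compute the reversal of a number given by digits. *)
Lemma digits_from_digits s :
  all (fun d => d < b) s -> last 1 s != 0 -> digits b (from_digits b s) = s.
Proof.
elim: s => [|d s IH] //= /andP [hd hs] hl.
have IHs : digits b (from_digits b s) = s.
  by apply: IH hs _; case: s hl.
have hpos : 0 < d + b * from_digits b s.
  case: s hl IHs {IH hs} => [|e s] hl IHs; first by rewrite /= muln0 addn0 lt0n.
  suff : from_digits b (e :: s) != 0 by lia.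
  by apply/negP => /eqP H; move: IHs; rewrite H.
have hmod : (d + b * from_digits b s) %% b = d.
  by rewrite mulnC addnC modnMDl modn_small.
have hdiv : (d + b * from_digits b s) %/ b = from_digits b s.
  by rewrite mulnC addnC divnMDl ?divn_small ?addn0 //; lia.
by rewrite digitsE // hmod hdiv IHs.
Qed.

(* Multiplying by b prepends a zero digit. *)
Lemma digsum_mulb m : digsum b (b * m) = digsum b m.
Proof.
case: (posnP m) => [->|hm]; first by rewrite muln0.
rewrite /digsum digitsE; last by rewrite muln_gt0 hm; lia.
by rewrite mulnC modnMl mulnK //; lia.
Qed.

Lemma digsum_mulbX j m : digsum b (b ^ j * m) = digsum b m.
Proof.
elim: j => [|j IH]; first by rewrite expn0 mul1n.
by rewrite expnS -mulnA digsum_mulb.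
Qed.

(* Each digit is at most the number it contributes to, so s_b(n) <= n. *)
Lemma digsum_le n : digsum b n <= n.
Proof.
elim: n {-2}n (leqnn n) => [|n IH] m hm; first by move: hm; rewrite leqn0 => /eqP ->.
case: (posnP m) => [->|hm0] //.
rewrite /digsum digitsE //= -/(digsum b (m %/ b)).
have hdiv : m %/ b < m by apply: ltn_Pdiv; lia.
have hrec := IH (m %/ b) ltac:(lia).
have hsplit : m = m %% b + b * (m %/ b) by rewrite mulnC addnC -divn_eq.
nia.
Qed.

End Digits.

Lemma rev_repeat (T : Type) (D : seq T) r :
  rev (flatten (nseq r D)) = flatten (nseq r (rev D)).
Proof.
have comm : forall (E : seq T) n, flatten (nseq n E) ++ E = E ++ flatten (nseq n E).
  by move=> E; elim=> [|n IH] /=; [rewrite cats0 | rewrite -catA IH].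
by elim: r => [|r IH] //=; rewrite rev_cat IH comm.
Qed.

Lemma last_repeat (T : Type) (D : seq T) r x :
  ~~ nilp D -> last x (flatten (nseq r.+1 D)) = last x D.
Proof.
move=> hD; elim: r x => [|r IH] x /=; first by rewrite cats0.
by rewrite last_cat IH; case: D hD {IH}.
Qed.

Lemma all_repeat (T : Type) (P : pred T) (D : seq T) r :
  all P D -> all P (flatten (nseq r D)).
Proof. by move=> hD; elim: r => [|r IH] //=; rewrite all_cat hD IH. Qed.

(* Euler's theorem in geometric-sum form: if Y > 1 is coprime to n, then n
   divides 1 + Y + ... + Y^(r-1) for r = phi(n (Y-1)). *)
Lemma dvdn_geom_totient n Y :
  1 < Y -> coprime Y n -> n %| geom Y (totient (n * Y.-1)).
Proof.
move=> hY hcop.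
have hcopm : coprime Y (n * Y.-1).
  by rewrite coprimeMr hcop; apply: coprimenP; lia.
have /eqP := cyclic.Euler_exp_totient hcopm.
rewrite eqn_mod_dvd; last by rewrite expn_gt0; lia.
by rewrite -geomE ?addnK 1?[Y.-1 * _]mulnC ?dvdn_pmul2r //; lia.
Qed.

Lemma part_pi_dvdn_exp b N : 0 < N -> N`_\pi(b) %| b ^ N.
Proof.
move=> hN; apply/dvdn_partP; first by rewrite part_gt0.
move=> p hp.
have : p \in \pi(b) by apply: (pnatPpi (part_pnat _ N)).
rewrite mem_primes => /and3P [_ _ hpb].
apply: (dvdn_trans (partn_dvd p hN (dvdn_part _ N))).
rewrite p_part; apply: (@dvdn_trans (b ^ logn p N)); first exact: dvdn_exp2r.
by apply/dvdn_exp2l/ltnW/ltn_logl.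
Qed.

Lemma coprime_exp_part b e N : 0 < b -> coprime (b ^ e) N`_\pi(b)^'.
Proof.
move=> hb; apply: coprimeXl.
by have := coprime_partC \pi(b) b N; rewrite part_pnat_id // pnat_pi.
Qed.

Section WARHFamily.
Variable b : nat.
Hypothesis hb : 2 <= b.

Lemma wARH_of_sum X T :
  0 < T -> X + rev_num b X = T -> digsum b T <= X -> wARH b T.
Proof. by move=> hT hXT hle; split=> //; exists (X - digsum b T); rewrite subnK. Qed.

Definition block (k : nat) : seq nat := 1 :: (nseq k 0 ++ nseq k.+1 b.-1).

Lemma size_block k : size (block k) = (k + k).+2.
Proof. by rewrite /block /= size_cat /= !size_nseq addnS. Qed.

Lemma from_digits_block k : from_digits b (block k) = 1 + b ^ k.+1 * (b ^ k.+1).-1.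
Proof.
have hF := from_digits_nseq_max hb k.+1.
set F := from_digits b (nseq k.+1 b.-1) in hF *.
rewrite /block -cat1s !from_digits_cat from_digits_nseq0 size_nseq -/F -hF /=.
by rewrite expnS in hF; nia.
Qed.

Lemma block_plus_rev k :
  from_digits b (block k) + from_digits b (rev (block k)) = b ^ (k + k.+1) * (b + 1).
Proof.
have hF := from_digits_nseq_max hb k.+1.
set F := from_digits b (nseq k.+1 b.-1) in hF *.
rewrite from_digits_block /block rev_cons rev_cat !rev_nseq -cats1.
rewrite !from_digits_cat from_digits_nseq0 size_cat !size_nseq -/F.
have hbk : b ^ k * b = F.+1 by rewrite hF expnS mulnC.
rewrite (addnC k.+1) expnD -hF /=; nia.
Qed.

Lemma block_digits k r : 0 < r ->
  digits b (from_digits b (flatten (nseq r (block k)))) = flatten (nseq r (block k)).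
Proof.
move=> hr; apply: digits_from_digits => //.
  have hb0 : 0 < b by lia.
  have hb1 : b.-1 < b by lia.
  by apply: all_repeat; rewrite /block -cat1s !all_cat !all_nseq /= hb hb0 hb1 !orbT.
case: r hr => // r _.
rewrite last_repeat // /block last_cons last_cat [nseq k.+1 _]/= last_cons.
by elim: k => [|k IH] //=; lia.
Qed.

Definition wARH_witness (k r : nat) : nat :=
  b ^ (k + k.+1) * ((b + 1) * geom (b ^ (k + k).+2) r).

Lemma wARH_witnessP k r : 0 < r -> wARH b (wARH_witness k r).
Proof.
move=> hr; set X := from_digits b (flatten (nseq r (block k))).
have hG := geom_gt0 (b ^ (k + k).+2) hr.
apply: (wARH_of_sum (X := X)).
- by rewrite /wARH_witness !muln_gt0 expn_gt0 hG; lia.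
- rewrite /rev_num block_digits // rev_repeat /X !from_digits_repeat //.
  by rewrite size_rev size_block -mulnDl block_plus_rev -mulnA.
- rewrite /wARH_witness digsum_mulbX //.
  apply: (leq_trans (digsum_le hb _)).
  rewrite /X from_digits_repeat // size_block from_digits_block leq_mul2r.
  apply/orP; right.
  have : b <= b ^ k.+1 by rewrite -{1}(expn1 b) leq_pexp2l //; lia.
  nia.
Qed.

End WARHFamily.

Theorem corollary6 (b : nat) (hb : 2 <= b) (N : nat) (hN : 0 < N) :
  forall K : nat, exists M : nat, K < M /\ wARH b (N * M).
Proof.
move=> K.
set k := N * K + N; set Y := b ^ (k + k).+2.
set r := totient (N`_\pi(b)^' * Y.-1).
have hY : 1 < Y by rewrite /Y -{1}(expn0 b) ltn_exp2l.
have hr : 0 < r by rewrite totient_gt0 muln_gt0 part_gt0; lia.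
have hNT : N %| wARH_witness b k r.
  rewrite -(partnC \pi(b) hN) /wARH_witness.
  apply: dvdn_mul; last by apply/dvdn_mull/dvdn_geom_totient/coprime_exp_part; lia.
  by apply: (dvdn_trans (part_pi_dvdn_exp b hN)); apply: dvdn_exp2l; lia.
exists (wARH_witness b k r %/ N).
rewrite -(ltn_pmul2l hN) muln_divA // mulKn //; split; last exact: wARH_witnessP.
rewrite /wARH_witness -/Y.
have hG : 0 < (b + 1) * geom Y r by rewrite muln_gt0 geom_gt0 // addn1.
have hexp : b ^ (N * K) <= b ^ (k + k.+1) by apply: leq_pexp2l; lia.
apply: (leq_trans (ltn_expl (N * K) hb)); apply: (leq_trans hexp).
exact: leq_pmulr.
Qed.
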